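(* Let $a,b$ be positive integers and let $k$ be an integer with $1\leq k\leq a+b$. Then $$\psi_k(K_{a,b})=\begin{cases}a+b & \text{if } k=1,\\ \min\{a,b\}-\left\lfloor \frac{k}{2}\right\rfloor+1 & \text{if } 1<k\leq 2\min\{a,b\}+1,\\ 0 & \text{otherwise.}\end{cases}$$
   Context: All graphs are finite, simple and nonempty. For a graph $G$ and a positive integer $k$, a $k$-path vertex cover ($k$-PVC) of $G$ is a set $S$ of vertices such that every path on $k$ vertices in $G$ contains at least one vertex of $S$ (if $G$ has no path on $k$ vertices, the empty set is a $k$-PVC). $\psi_k(G)$ denotes the minimum cardinality of a $k$-PVC of $G$. $K_{a,b}$ is the complete bipartite graph with parts of sizes $a$ and $b$. *)

From mathcomp Require Import all_boot.
Set Implicit Arguments. Unset Strict Implicit. Unset Printing Implicit Defensive.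

(* A (simple) graph is given by a finite vertex type T and an adjacency
   relation e : rel T (symmetric and irreflexive for the graphs we use). *)

Definition is_kpath (T : finType) (e : rel T) (k : nat) (p : seq T) : bool :=
  [&& size p == k, uniq p &
      match p with [::] => true | x :: s => path e x s end].

Definition is_kpvc (T : finType) (e : rel T) (k : nat) (S : {set T}) : bool :=
  [forall t : k.-tuple T, is_kpath e k t ==> has (mem S) t].

(* psi_k(G): minimum cardinality of a k-PVC (the whole vertex set is always a
   k-PVC for k >= 1, so #|T| is a harmless default/upper bound). *)
Definition psi (T : finType) (e : rel T) (k : nat) : nat :=
  \big[minn/#|T|]_(S : {set T} | is_kpvc e k S) #|S|.

Definition Kab_rel (a b : nat) : rel ('I_a + 'I_b)%type :=
  fun x y => match x, y with
             | inl _, inr _ | inr _, inl _ => true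
             | _, _ => false
             end.
Arguments Kab_rel a b : clear implicits.

From mathcomp Require Import all_boot order zify.
Import Order.TTheory.

Set Implicit Arguments.
Unset Strict Implicit.
Unset Printing Implicit Defensive.

(* In a complete bipartite graph every path alternates between the two sides,
   so a path on k vertices has at least k/2 rounded down vertices on each
   side; conversely, interleaving the uncovered vertices of the two sides
   produces such a path whenever both sides have enough of them. Hence a set S
   is a k-PVC exactly when the x and y vertices it leaves uncovered on the two
   sides satisfy x + y < k or 2 min(x, y) + 1 < k, and psi_k(K_{a,b}) is the
   solution of this small integer optimisation problem: the optimum removes
   vertices from the smaller side only. *)

Fixpoint alternate (T : Type) (n : nat) (X Y : seq T) : seq T :=
  if n is n'.+1 then if X is x :: X' then x :: alternate n' Y X' else [::]
  else [::].

Lemma size_alternate (T : Type) n (X Y : seq T) :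
  n <= 2 * size X -> n <= 2 * size Y + 1 -> size (alternate n X Y) = n.
Proof.
elim: n X Y => [|n IHn] [|x X] Y //= leX leY.
by rewrite IHn //=; lia.
Qed.

Lemma mem_alternate (T : eqType) n (X Y : seq T) :
  {subset alternate n X Y <= X ++ Y}.
Proof.
elim: n X Y => [|n IHn] [|x X] Y //= z; rewrite inE => /predU1P [-> | /IHn].
  by rewrite mem_head.
by rewrite inE !mem_cat orbC => ->; rewrite orbT.
Qed.

Lemma alternate_uniq (T : eqType) n (X Y : seq T) :
  uniq (X ++ Y) -> uniq (alternate n X Y).
Proof.
elim: n X Y => [|n IHn] [|x X] Y //= /andP [xXY uXY].
rewrite IHn ?andbT; last by rewrite uniq_catC.
by apply: contra xXY => /mem_alternate; rewrite !mem_cat orbC.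
Qed.

Section PathVertexCover.
Variables (T : finType) (e : rel T).

Lemma kpvcP k (S : {set T}) :
  reflect (forall p, is_kpath e k p -> has (mem S) p) (is_kpvc e k S).
Proof.
apply: (iffP forallP) => [coverS p pk | coverS t]; last exact/implyP/coverS.
have sz_p : size p == k by case/and3P: pk.
exact: (implyP (coverS (Tuple sz_p))).
Qed.

Lemma psi_leq k (S : {set T}) : is_kpvc e k S -> psi e k <= #|S|.
Proof. exact: (bigmin_le_cond #|T| (fun S : {set T} => #|S|)). Qed.

Lemma psi_le_card k : psi e k <= #|T|.
Proof.
rewrite /psi; elim/big_ind: _ => // [x y le_x _ | S _]; last exact: max_card.
by rewrite geq_min le_x.
Qed.

Lemma psi_geq k n :
  n <= #|T| -> (forall S : {set T}, is_kpvc e k S -> n <= #|S|) -> n <= psi e k.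
Proof.
move=> leT leS; rewrite /psi.
by elim/big_ind: _ => // x y lex ley; rewrite leq_min lex.
Qed.

Definition complete_bipartite (side : pred T) :=
  forall x y, e x y = (side x != side y).

Lemma complete_bipartiteC side :
  complete_bipartite side -> complete_bipartite (predC side).
Proof. by move=> eE x y; rewrite eE /= (inj_eq negb_inj). Qed.

Section CompleteBipartite.
Variables (side : pred T) (eE : complete_bipartite side).

Lemma count_side_path x s :
  path e x s -> count side (x :: s) = (side x + size s).+1./2.
Proof.
elim: s x => [|y s IHs] x /=; first by case: (side x).
rewrite eE => /andP [xy /IHs]; rewrite /= => ->.
by case: (side x) (side y) xy => [] [].
Qed.

Lemma kpath_count_side k p : is_kpath e k p -> k <= 2 * count side p + 1.
Proof.
case/and3P => /eqP <- _; case: p => [|x s] //= /count_side_path /=.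
by case: (side x) => /= ->; lia.
Qed.

Lemma path_alternate n x X Y :
  all side (x :: X) -> all (predC side) Y -> path e x (alternate n Y X).
Proof.
elim: n x X Y side eE => [|n IHn] x X [|y Y] //= side' eE' /andP [sx sX] /andP [sy sY].
rewrite eE' sx (negbTE sy) /=.
apply: (IHn y Y X _ (complete_bipartiteC eE')) => /=; first by rewrite sy.
by apply: sub_all sX => z /= ->.
Qed.

Lemma kpath_alternate k (X Y : seq T) :
  all side X -> all (predC side) Y -> uniq (X ++ Y) ->
  k <= 2 * size X -> k <= 2 * size Y + 1 -> is_kpath e k (alternate k X Y).
Proof.
move=> sX sY uXY leX leY.
rewrite /is_kpath size_alternate // eqxx alternate_uniq //.
case: k leX leY => [|k] // leX leY; case: X sX leX uXY => // x X sX _ _ /=.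
exact: path_alternate.
Qed.

End CompleteBipartite.

Lemma count_leq_card (P : pred T) (A : {set T}) p :
  uniq p -> {in p, forall x, P x -> x \in A} -> count P p <= #|A|.
Proof.
move=> up PA; rewrite -size_filter -(card_uniqP (filter_uniq P up)).
by apply/subset_leq_card/subsetP => x; rewrite mem_filter => /andP [Px /PA]; apply.
Qed.

Lemma exists_kpath (side : pred T) (A B : {set T}) k :
  complete_bipartite side ->
  (forall v, v \in A -> side v) -> (forall v, v \in B -> ~~ side v) ->
  k <= 2 * #|A| -> k <= 2 * #|B| + 1 ->
  exists2 p, is_kpath e k p & {subset p <= A :|: B}.
Proof.
move=> eE sA sB leA leB; exists (alternate k (enum A) (enum B)).
  apply: kpath_alternate; rewrite -?cardE //.
  - by apply/allP => v; rewrite mem_enum => /sA.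
  - by apply/allP => v; rewrite mem_enum => /sB.
  rewrite cat_uniq !enum_uniq andbT /=; apply/hasPn => v; rewrite !mem_enum.
  by move=> /sB nv; apply: contraNN nv => /sA.
by move=> v /mem_alternate; rewrite mem_cat !mem_enum inE.
Qed.

Section UncoveredSides.
Variables (side : pred T) (S : {set T}).
Let x := #|[set v | side v] :\: S|.
Let y := #|[set v | ~~ side v] :\: S|.

Lemma card_sidesD : x + y + #|S| = #|T|.
Proof.
rewrite /x /y -(cardsC S) -(cardsID [set v | side v] (~: S)) [RHS]addnC.
by congr (_ + _ + _); apply: eq_card => v; rewrite !inE andbC.
Qed.

Lemma kpath_sidesD k p : complete_bipartite side ->
  is_kpath e k p -> ~~ has (mem S) p -> k <= x + y /\ k <= 2 * minn x y + 1.
Proof.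
move=> eE pk /hasPn avoidS.
have [/eqP sz_p up _] := and3P pk.
have ltx : count side p <= x.
  by apply: count_leq_card => // v pv /= sv; rewrite !inE sv andbT avoidS.
have lty : count (predC side) p <= y.
  by apply: count_leq_card => // v pv /= sv; rewrite !inE sv andbT avoidS.
have := count_predC side p; have := kpath_count_side eE pk.
have := kpath_count_side (complete_bipartiteC eE) pk; lia.
Qed.

Lemma kpvc_complete_bipartite k : complete_bipartite side ->
  is_kpvc e k S = (x + y < k) || (2 * minn x y + 1 < k).
Proof.
move=> eE; apply/kpvcP/idP => [coverS | bigk p pk]; last first.
  by apply/negPn/negP => /(kpath_sidesD eE pk); lia.
rewrite !ltnNge -negb_and; apply/negP => /andP [le_xy le_min].
have [Ax Ay] : (forall v, v \in [set v | side v] :\: S -> side v) /\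
               (forall v, v \in [set v | ~~ side v] :\: S -> ~~ side v).
  by split=> v; rewrite !inE => /andP [].
have [[leX leY] | [leY leX]] :
  (k <= 2 * x /\ k <= 2 * y + 1) \/ (k <= 2 * y /\ k <= 2 * x + 1) by lia.
- have [p pk pXY] := exists_kpath eE Ax Ay leX leY.
  by case/hasP: (coverS p pk) => v /pXY; rewrite !inE => /orP [] /andP [/negP].
- have Ax' v : v \in [set v | side v] :\: S -> ~~ predC side v.
    by move/Ax; rewrite /= negbK.
  have [p pk pXY] := exists_kpath (complete_bipartiteC eE) Ay Ax' leY leX.
  by case/hasP: (coverS p pk) => v /pXY; rewrite !inE => /orP [] /andP [/negP].
Qed.

End UncoveredSides.

Lemma psi_le_side (side : pred T) k c : complete_bipartite side ->
  c <= #|[set v | side v]| -> 2 * (#|[set v | side v]| - c) + 1 < k ->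
  psi e k <= c.
Proof.
set L := [set v | side v] => eE leL bigk.
set S := [set v in take c (enum L)].
have cardS : #|S| = c.
  by rewrite cardsE (card_uniqP (take_uniq _ (enum_uniq _))) size_takel -?cardE.
have subSL : S \subset L.
  by apply/subsetP => v; rewrite inE => /mem_take; rewrite mem_enum.
rewrite -cardS psi_leq // (kpvc_complete_bipartite _ _ eE) -/L cardsDS // cardS.
by apply/orP; right; lia.
Qed.

End PathVertexCover.

Section CompleteBipartiteGraph.
Variables a b : nat.

Definition isl (v : 'I_a + 'I_b) : bool := if v is inl _ then true else false.

Lemma Kab_complete_bipartite : complete_bipartite (Kab_rel a b) isl.
Proof. by move=> [?|?] [?|?]. Qed.

Lemma card_isl : #|[set v | isl v]| = a.
Proof.
have -> : [set v | isl v] = @inl _ 'I_b @: [set: 'I_a].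
  apply/setP => -[i | j]; rewrite inE ?imset_f //.
  by apply/esym/imsetP => -[].
by rewrite card_imset ?cardsT ?card_ord //; apply: inl_inj.
Qed.

Lemma card_isr : #|[set v | ~~ isl v]| = b.
Proof.
have -> : [set v | ~~ isl v] = @inr 'I_a _ @: [set: 'I_b].
  apply/setP => -[i | j]; rewrite inE ?imset_f //.
  by apply/esym/imsetP => -[].
by rewrite card_imset ?cardsT ?card_ord //; apply: inr_inj.
Qed.

End CompleteBipartiteGraph.

Arguments isl {a b}.

Theorem mainTheorem1 (a b k : nat) :
  0 < a -> 0 < b -> 1 <= k <= a + b ->
  psi (Kab_rel a b) k =
    if k == 1 then a + b
    else if k <= 2 * minn a b + 1 then minn a b - k./2 + 1
    else 0.
Proof.
move=> _ _ /andP [k_gt0 le_k].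
have eE := @Kab_complete_bipartite a b.
have cardT : #|{: 'I_a + 'I_b}| = a + b by rewrite card_sum !card_ord.
apply/eqP; rewrite eqn_leq; apply/andP; split.
  case: eqP => [_ | k_neq1]; first by rewrite -cardT psi_le_card.
  have [side eS card_side] : exists2 side, complete_bipartite (Kab_rel a b) side &
                                      #|[set v | side v]| = minn a b.
    case: (leqP a b) => [le_ab | lt_ba]; [exists isl | exists (predC isl)] => //.
    - by rewrite card_isl; lia.
    - exact: complete_bipartiteC.
    - by apply: etrans (@card_isr a b) _; lia.
  by case: ifP => le_km; apply: (psi_le_side eS); rewrite card_side; lia.
apply: psi_geq => [|S]; first by rewrite cardT; case: eqP => // _; case: ifP; lia.
rewrite (kpvc_complete_bipartite _ _ eE).
have := card_sidesD isl S; rewrite cardT.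
have := subset_leq_card (subsetDl [set v | isl v] S); rewrite card_isl.
have := subset_leq_card (subsetDl [set v | ~~ isl v] S); rewrite card_isr.
by case: eqP => [-> | _]; [|case: ifP]; lia.
Qed.
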